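(* Assume the context distribution is stationary, i.e. $p(x,t)=p(x)p(t)$ on $\mathcal{X}\times[0,T]$ and $p(x\mid t')=p(x)$. Suppose $\pi_0(a\mid x,t)>0$ for all $x\in\mathcal{X}$, $t\in[0,T]$, $a\in\mathcal{A}$; that $p(\phi(t'))>0$; and that $\Delta_q(x,t,t',a)=\Delta_{\hat f}(x,t,t',a)$ for all $x\in\mathcal{X}$, $a\in\mathcal{A}$ and $t\in[0,T]$ with $\mathbb{I}_\phi(t,t')=1$. Then $$n\,\mathbb{V}_{\mathcal{D}}\big[\nabla_\zeta\hat V^{\mathrm{OPFV}}_{t'}(\pi_\zeta;\mathcal{D})\big]=\mathbb{E}_{p(x,t)\pi_0(a\mid x,t)}\!\left[\Big(\frac{\mathbb{I}_\phi(t,t')}{p(\phi(t'))}\frac{\pi_\zeta(a\mid x,t')}{\pi_0(a\mid x,t)}s_\zeta(x,t',a)\Big)^2\sigma^2(x,t,a)\right]$$ $$+\mathbb{E}_{p(x,t)}\!\left[\Big(\frac{\mathbb{I}_\phi(t,t')}{p(\phi(t'))}\Big)^2\mathbb{V}_{\pi_0(a\mid x,t)}\!\Big[\frac{\pi_\zeta(a\mid x,t')}{\pi_0(a\mid x,t)}\Delta_{q,\hat f}(x,t',a)s_\zeta(x,t',a)\Big]\right]$$ $$+\mathbb{V}_{p(t)}\!\left[\frac{\mathbb{I}_\phi(t,t')}{p(\phi(t'))}\right]\mathbb{E}_{p(x)}\!\left[\mathbb{E}_{\pi_\zeta(a\mid x,t')}\big[\Delta_{q,\hat f}(x,t',a)s_\zeta(x,t',a)\big]^2\right]+\mathbb{V}_{p(x)}\!\left[\mathbb{E}_{\pi_\zeta(a\mid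 x,t')}[q(x,t',a)s_\zeta(x,t',a)]\right].$$
   Context: Contexts $x\in\mathcal{X}$, finite action set $\mathcal{A}$, continuous time $t$, rewards $r\in[0,r_{\max}]$. Logged data $\mathcal{D}=\{(x_i,t_i,a_i,r_i)\}_{i=1}^n$: $n$ i.i.d. draws $(x,t)\sim p(x,t)$ supported on $\mathcal{X}\times[0,T]$, $a\sim\pi_0(a\mid x,t)$, $r\sim p(r\mid x,t,a)$; reward distributions defined for all $t\ge0$; $q(x,t,a)=\mathbb{E}[r\mid x,t,a]$, $\sigma^2(x,t,a)=\mathbb{V}[r\mid x,t,a]$. Target time $t'>T$. $\pi_\zeta(a\mid x,t)$ is a policy differentiable in a parameter vector $\zeta$, with score $s_\zeta(x,t,a)=\nabla_\zeta\log\pi_\zeta(a\mid x,t)$. A time feature function $\phi$ maps times to labels; $\mathbb{I}_\phi(t,t')=\mathbb{I}\{\phi(t)=\phi(t')\}$, $p(\phi(t'))=\int_0^Tp(s)\mathbb{I}_\phi(s,t')ds$ with $p(t)$ the marginal density of $t$. $\hat f$ is a fixed regressor. The OPFV gradient estimator is $$\nabla_\zeta\hat V^{\mathrm{OPFV}}_{t'}(\pi_\zeta;\mathcal{D})=\frac1n\sum_{i=1}^n\left\{\frac{\mathbb{I}_\phi(t_i,t')}{p(\phi(t'))}\frac{\pi_\zeta(a_i\mid x_i,t')}{\pi_0(a_i\mid x_i,t_i)}\big(r_i-\hat f(x_i,t_i,a_i)\big)s_\zeta(x_i,t',a_i)+\mathbb{E}_{\pi_\zeta(a\mid x_i,t')}\big[\hat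 f(x_i,t',a)s_\zeta(x_i,t',a)\big]\right\}.$$ $\Delta_q(x,t,t',a)=q(x,t,a)-q(x,t',a)$, $\Delta_{\hat f}(x,t,t',a)=\hat f(x,t,a)-\hat f(x,t',a)$, $\Delta_{q,\hat f}(x,t,a)=q(x,t,a)-\hat f(x,t,a)$. Variances and squares of vector-valued quantities are understood coordinatewise (the identity holds for each coordinate of $\zeta$, with $s_\zeta$ replaced by its corresponding coordinate). *)

From HB Require Import structures.
From mathcomp Require Import all_boot all_order all_algebra.
From mathcomp Require Import all_classical all_reals all_analysis.
Set Implicit Arguments. Unset Strict Implicit. Unset Printing Implicit Defensive.
Import Order.TTheory GRing.Theory Num.Theory.
Import numFieldNormedType.Exports.
Local Open Scope classical_set_scope.
Local Open Scope ring_scope.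

Section OPFV.
Variables (R : realType) (dX : measure_display) (X : measurableType dX)
  (A : finType).

(* A sample (x, t, a, r) is encoded as ((x, t), a), r). *)
Definition sample := (X * R * A * R)%type.

Definition indphi (L : eqType) (phi : R -> L) (t t' : R) : R :=
  (phi t == phi t')%:R.

Definition Et (pt : R -> R) (T : R) (g : R -> R) : R :=
  \int[lebesgue_measure]_(t in `[0, T]) (pt t * g t).
Definition Vt pt T (g : R -> R) : R := Et pt T (fun t => (g t - Et pt T g) ^+ 2).

Definition pphi (L : eqType) pt T (phi : R -> L) (t' : R) : R :=
  Et pt T (fun s => indphi phi s t').

Definition Ex (px : probability X R) (g : X -> R) : R := \int[px]_x g x.
Definition Vx px (g : X -> R) : R := Ex px (fun x => (g x - Ex px g) ^+ 2).

Definition Epol (pol : X -> R -> A -> R) x t (h : A -> R) : R :=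
  \sum_a pol x t a * h a.
Definition Vpol pol x t (h : A -> R) : R :=
  Epol pol x t (fun a => (h a - Epol pol x t h) ^+ 2).

(* reward distributions p(r | x, t, a), for every real t, as probability kernels *)
Definition Er (Pr : A -> R.-pker (X * R)%type ~> R) a x t (h : R -> R) : R :=
  \int[Pr a (x, t)]_r h r.
Definition qmean Pr x t a : R := Er Pr a x t id.
Definition sigma2 Pr x t a : R := Er Pr a x t (fun r => (r - qmean Pr x t a) ^+ 2).

Definition E1 px pt T pi0 Pr (g : sample -> R) : R :=
  Ex px (fun x => Et pt T (fun t => Epol pi0 x t (fun a =>
    Er Pr a x t (fun r => g (x, t, a, r))))).

Definition E1e (px : probability X R) (pt : R -> R) (T : R) (pi0 : X -> R -> A -> R)
    (Pr : A -> R.-pker (X * R)%type ~> R) (g : sample -> \bar R) : \bar R :=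
  (\int[px]_x \int[lebesgue_measure]_(t in `[0%R, T])
     ((pt t)%:E * \sum_a ((pi0 x t a)%:E * \int[Pr a (x, t)]_r g (x, t, a, r))))%E.

Fixpoint ED px pt T pi0 Pr (k : nat) (h : seq sample -> R) : R :=
  match k with
  | 0 => h [::]
  | k'.+1 => E1 px pt T pi0 Pr (fun s => ED px pt T pi0 Pr k' (fun D => h (s :: D)))
  end.
Definition VD px pt T pi0 Pr k (h : seq sample -> R) : R :=
  ED px pt T pi0 Pr k (fun D => (h D - ED px pt T pi0 Pr k h) ^+ 2).

Definition score (d : nat) (pi : 'rV[R]_d -> X -> R -> A -> R) (zeta : 'rV[R]_d)
    (j : 'I_d) x t a : R :=
  derive (fun z => ln (pi z x t a)) zeta (delta_mx 0 j).

Definition opfv_term (L : eqType) pt T (phi : R -> L) (t' : R) d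
    (pi : 'rV[R]_d -> X -> R -> A -> R) zeta j (pi0 : X -> R -> A -> R)
    (fhat : X -> R -> A -> R) (s : sample) : R :=
  let: (x, t, a, r) := s in
  indphi phi t t' / pphi pt T phi t' * (pi zeta x t' a / pi0 x t a)
    * (r - fhat x t a) * score pi zeta j x t' a
  + Epol (pi zeta) x t' (fun b => fhat x t' b * score pi zeta j x t' b).

Definition opfv_grad (L : eqType) pt T (phi : R -> L) t' d pi zeta j pi0 fhat
    (D : seq sample) : R :=
  (size D)%:R^-1 * \sum_(s <- D) @opfv_term L pt T phi t' d pi zeta j pi0 fhat s.

End OPFV.

(* Let Y be one summand of the estimator: the estimator is the empirical mean of n i.i.d.
   copies of Y, so n V[estimator] = E[Y^2] - E[Y]^2, and both moments are computed by
   integrating out r, a, t and x in turn.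
   Given (x, t, a), Y is affine in r with slope K = w(t) rho s, where
   rho = pi_zeta(a | x, t') / pi0(a | x, t), so integrating r replaces r by q(x, t, a) and
   adds K^2 sigma^2.  Where w(t) <> 0, the assumption Delta_q = Delta_fhat
   turns K (q - fhat)(x, t, a) into w(t) times the importance-weighted residual
   rho (q - fhat)(x, t', a) s, whose pi0-mean is h(x) = E_{pi_zeta}[(q - fhat) s]; hence
   E[Y | x, t] = w(t) h(x) + g(x) with g(x) = E_{pi_zeta}[fhat s], and the pi0-variance of
   the residual enters E[Y^2 | x, t].  Averaging over t with E[w] = 1 and
   E[w^2] = 1 + V[w] gives E[Y | x] = h + g = E_{pi_zeta}[q s] plus the extra term V[w] h^2,
   and averaging over x yields the four terms.  All integrability needed along the way
   follows from E[Y^2] < +oo. *)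

From HB Require Import structures.
From mathcomp Require Import all_boot all_order all_algebra.
From mathcomp Require Import all_classical all_reals all_analysis.
From mathcomp Require Import measurable_realfun ring lra.
Import Order.TTheory GRing.Theory Num.Theory.
Import numFieldNormedType.Exports.
Local Open Scope classical_set_scope.
Local Open Scope ring_scope.

Set Implicit Arguments. Unset Strict Implicit. Unset Printing Implicit Defensive.

Lemma inv_measurable (R : realType) : measurable_fun [set: R] (@GRing.inv R).
Proof.
have -> : [set: R] = [set~ 0] `|` [set 0].
  apply/seteqP; split=> x // _ /=.
  by have [->|/eqP] := eqVneq x 0; [right|left].
apply/measurable_funU => //; first exact: measurableC.
split.
  apply: open_continuous_measurable_fun.
    by rewrite openC; apply: accessible_closed_set1; exact: hausdorff_accessible.
  by move=> x /set_mem /eqP x0; exact: inv_continuous.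
move=> _ B mB; rewrite (_ : _ `&` _ = if (0:R)^-1 \in B then [set 0] else set0).
  by case: ifP.
apply/seteqP; split=> x /=.
  by case=> -> h; rewrite mem_set.
by case: ifPn => // /set_mem h ->.
Qed.

Section integrable_EFin.
Context d (T : measurableType d) (R : realType) (mu : {measure set T -> \bar R}).
Variables (D : set T) (mD : measurable D).

Lemma integrable_EFinD (f g : T -> R) : mu.-integrable D (EFin \o f) ->
  mu.-integrable D (EFin \o g) -> mu.-integrable D (EFin \o (fun x => f x + g x)).
Proof. by move=> hf hg; apply: eq_integrable (integrableD mD hf hg). Qed.

Lemma integrable_EFinZl (c : R) (f : T -> R) : mu.-integrable D (EFin \o f) ->
  mu.-integrable D (EFin \o (fun x => c * f x)).
Proof. by move=> hf; apply: eq_integrable (integrableZl mD c hf). Qed.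

Lemma eq_integrable_EFin (f g : T -> R) : (forall x, D x -> f x = g x) ->
  mu.-integrable D (EFin \o f) -> mu.-integrable D (EFin \o g).
Proof. by move=> fg; apply: eq_integrable => // x /set_mem Dx /=; rewrite fg. Qed.

Lemma integrable_fine (f : T -> \bar R) : mu.-integrable D f ->
  mu.-integrable D (EFin \o (fun x => fine (f x))).
Proof.
move=> fi; have [mf _] := integrableP _ _ _ fi.
apply: le_integrable fi => //; last first.
  by move=> x _ /=; case: (f x) => [r| |] //=; rewrite leey.
exact/measurable_EFinP/measurableT_comp.
Qed.

End integrable_EFin.

Section bounded_support.
Variables (R : realType) (mu : {measure set R -> \bar R}) (a b : R).
Hypotheses (mu1 : mu setT = 1%E) (mu_ab : mu `[a, b]%classic = 1%E).

Let mu_outside : mu (~` `[a, b]%classic) = 0%E.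
Proof.
have : (1 + mu (~` `[a, b]%classic) = 1 + 0)%E.
  rewrite adde0 -{1}mu_ab -measureU //; last exact: setICr.
    by rewrite setUCr; exact: mu1.
  exact: measurableC.
case: (mu (~` `[a, b]%classic)) => [r||] //=.
by rewrite -!EFinD => -[] /addrI ->.
Qed.

Lemma integrable_exprn k : mu.-integrable setT (EFin \o (fun r : R => r ^+ k)).
Proof.
apply/(negligible_integrable (measurableC (measurable_itv `[a, b])) _ _ mu_outside) => //.
- exact/measurable_EFinP/measurable_funX.
rewrite setTD setCK; apply: measurable_bounded_integrable => //.
- by rewrite mu_ab ltry.
exists ((`|a| + `|b|) ^+ k); split; first by rewrite realE exprn_ge0 ?orbT.
move=> M hM x /=; rewrite in_itv /= => /andP[ax xb].
have xab : `|x| <= `|a| + `|b|.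
  have := ler_norm b; have := ler_norm (- a); rewrite normrN => na nb.
  have := normr_ge0 a; have := normr_ge0 b => a0 b0.
  by rewrite ler_norml; apply/andP; split; lra.
rewrite normrX (le_trans _ (ltW hM)) //.
by rewrite lerXn2r ?nnegrE.
Qed.

Lemma integrable_quadratic (c0 c1 c2 : R) :
  mu.-integrable setT (EFin \o (fun r => c0 + c1 * r + c2 * r ^+ 2)).
Proof.
apply: integrable_EFinD => //; last exact/integrable_EFinZl/integrable_exprn.
apply: integrable_EFinD => //.
  apply: eq_integrable_EFin (integrable_EFinZl _ c0 (integrable_exprn 0)) => // r _.
  by rewrite expr0 mulr1.
by apply: eq_integrable_EFin (integrable_EFinZl _ c1 (integrable_exprn 1)).
Qed.

Lemma Rintegral_quadratic (c0 c1 c2 : R) :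
  \int[mu]_r (c0 + c1 * r + c2 * r ^+ 2) =
  c0 + c1 * \int[mu]_r r + c2 * \int[mu]_r (r ^+ 2).
Proof.
have int_of (f : R -> R) c0' c1' c2' : (forall r, c0' + c1' * r + c2' * r ^+ 2 = f r) ->
    mu.-integrable setT (EFin \o f).
  by move=> e; apply: eq_integrable_EFin (integrable_quadratic c0' c1' c2') => // r _.
rewrite RintegralD //; last 2 first.
- by apply: (int_of _ c0 c1 0) => r; ring.
- by apply: (int_of _ 0 0 c2) => r; ring.
rewrite RintegralD //; last 2 first.
- by apply: (int_of _ c0 0 0) => r; ring.
- by apply: (int_of _ 0 c1 0) => r; ring.
rewrite Rintegral_cst // mu1 mulr1 !RintegralZl //; first exact: integrable_exprn.
by apply: (int_of _ 0 1 0) => r /=; ring.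
Qed.

Lemma Rintegral_variance : let m := \int[mu]_r r in
  \int[mu]_r (r - m) ^+ 2 = \int[mu]_r (r ^+ 2) - m ^+ 2.
Proof.
move=> m; rewrite (@eq_Rintegral _ _ _ mu setT (fun r => m ^+ 2 + (- 2 * m) * r + 1 * r ^+ 2)).
  by rewrite Rintegral_quadratic -/m; ring.
by move=> r _; ring.
Qed.

Lemma Rintegral_affine_moments (al be ga B K : R) :
  let m := \int[mu]_r r in
  \int[mu]_r (al + be * (B + K * r) + ga * (B + K * r) ^+ 2)
  = al + be * (B + K * m) + ga * ((B + K * m) ^+ 2 + K ^+ 2 * \int[mu]_r (r - m) ^+ 2).
Proof.
move=> m; rewrite Rintegral_variance -/m.
rewrite (@eq_Rintegral _ _ _ mu setT (fun r => (al + be * B + ga * B ^+ 2)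
  + (be * K + 2 * ga * B * K) * r + (ga * K ^+ 2) * r ^+ 2)).
  by rewrite Rintegral_quadratic -/m; ring.
by move=> r _; ring.
Qed.

End bounded_support.

Lemma measurable_Rintegral_kernel d d' (X : measurableType d) (Y : measurableType d')
    (R : realType) (k : R.-ker X ~> Y) (f : Y -> R) :
  measurable_fun setT f -> measurable_fun setT (fun x => \int[k x]_y f y).
Proof.
move=> mf; apply: measurableT_comp; first exact: fine_measurable.
under eq_fun do rewrite integralE.
have mfE : measurable_fun setT (EFin \o f) by exact/measurable_EFinP.
apply: emeasurable_funB; apply: measurable_fun_integral_kernel => //;
  by [exact: measurable_kernel | exact: measurable_funepos | exact: measurable_funeneg].
Qed.

Section parametric_integral.
Context d d' (X : measurableType d) (Y : measurableType d') (R : realType).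
Variables (mu : {sigma_finite_measure set Y -> \bar R}) (D : set Y) (mD : measurable D).

Lemma measurable_integral_param (F : X -> Y -> \bar R) :
  measurable_fun setT (fun xy : X * Y => F xy.1 xy.2) -> (forall x y, (0 <= F x y)%E) ->
  measurable_fun setT (fun x => (\int[mu]_(y in D) F x y)%E).
Proof.
move=> mF F0.
rewrite (_ : (fun x => _) = fubini_F mu (fun xy => (F xy.1 xy.2 * (\1_D xy.2)%:E)%E)).
  apply: measurable_fun_fubini_tonelli_F => [|xy]; last exact: mule_ge0.
  apply: emeasurable_funM => //; apply/measurable_EFinP.
  exact: measurableT_comp (measurable_indic mD) measurable_snd.
by apply/funext => x; rewrite integral_mkcond epatch_indic.
Qed.

Lemma measurable_Rintegral_param (F : X -> Y -> R) :
  measurable_fun setT (fun xy : X * Y => F xy.1 xy.2) ->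
  measurable_fun setT (fun x => \int[mu]_(y in D) F x y).
Proof.
move=> mF; apply: measurableT_comp; first exact: fine_measurable.
under eq_fun do rewrite integralE.
have mFE : measurable_fun setT (fun xy : X * Y => (F xy.1 xy.2)%:E) by exact/measurable_EFinP.
apply: emeasurable_funB; apply: measurable_integral_param => //.
- rewrite (_ : (fun xy => _) = ((fun xy : X * Y => (F xy.1 xy.2)%:E)^\+)%E).
    exact: measurable_funepos.
  by apply/funext => xy; rewrite !funeposE.
- rewrite (_ : (fun xy => _) = ((fun xy : X * Y => (F xy.1 xy.2)%:E)^\-)%E).
    exact: measurable_funeneg.
  by apply/funext => xy; rewrite !funenegE.
Qed.

End parametric_integral.

Section policy_expectation.
Variables (R : realType) (dX : measure_display) (X : measurableType dX) (A : finType).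
Variables (pol : X -> R -> A -> R) (x : X) (t : R).
Hypothesis pol_sum1 : \sum_a pol x t a = 1.
Local Notation E := (Epol pol x t).

Lemma Epol_linear (c0 c1 c2 c3 : R) (z e : A -> R) :
  E (fun a => c0 + c1 * z a + c2 * z a ^+ 2 + c3 * e a) =
  c0 + c1 * E z + c2 * E (fun a => z a ^+ 2) + c3 * E e.
Proof.
rewrite -[in RHS](mulr1 c0) -pol_sum1 /Epol !mulr_sumr -!big_split /=.
by apply: eq_bigr => a _; ring.
Qed.

Lemma VpolE (z : A -> R) : Vpol pol x t z = E (fun a => z a ^+ 2) - E z ^+ 2.
Proof.
rewrite /Vpol (_ : (fun a => _) =
    fun a => E z ^+ 2 + (- 2 * E z) * z a + 1 * z a ^+ 2 + 0 * z a).
  by rewrite Epol_linear; ring.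
by apply/funext => a; ring.
Qed.

Lemma Epol_affine_moments (al be ga w g : R) (z e : A -> R) :
  E (fun a => al + be * (w * z a + g) + ga * ((w * z a + g) ^+ 2 + e a))
  = al + be * (w * E z + g) + ga * (E e + w ^+ 2 * Vpol pol x t z + (w * E z + g) ^+ 2).
Proof.
rewrite VpolE (_ : (fun a => _) = fun a => (al + be * g + ga * g ^+ 2)
  + (be * w + 2 * ga * w * g) * z a + (ga * w ^+ 2) * z a ^+ 2 + ga * e a).
  by rewrite Epol_linear; ring.
by apply/funext => a; ring.
Qed.

End policy_expectation.

Section time_expectation.
Variables (R : realType) (pt : R -> R) (T : R).
Hypotheses (pt_measurable : measurable_fun setT pt) (pt_ge0 : forall t, 0 <= pt t)
  (pt_int1 : (\int[lebesgue_measure]_(t in `[0%R, T]) (pt t)%:E = 1)%E).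

Definition Et_integrable (F : R -> R) :=
  lebesgue_measure.-integrable `[0%R, T] (EFin \o (fun t => pt t * F t)).

Let m0T : measurable (`[0%R, T] : set (measurableTypeR R)). Proof. exact: measurable_itv. Qed.

Lemma eq_Et (F G : R -> R) : (forall t, 0 <= t <= T -> F t = G t) ->
  Et pt T F = Et pt T G.
Proof.
by move=> FG; apply: eq_Rintegral => t; rewrite inE /= in_itv /= => /FG ->.
Qed.

Lemma eq_Et_integrable (F G : R -> R) : (forall t, 0 <= t <= T -> F t = G t) ->
  Et_integrable F -> Et_integrable G.
Proof.
by move=> FG iF; apply: eq_integrable_EFin iF => // t; rewrite /= in_itv /= => /FG ->.
Qed.

Lemma Et_integrableD (F G : R -> R) : Et_integrable F -> Et_integrable G ->
  Et_integrable (fun t => F t + G t).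
Proof.
move=> iF iG; rewrite /Et_integrable.
by apply: (eq_integrable_EFin m0T _ (integrable_EFinD m0T iF iG)) => t _; rewrite mulrDr.
Qed.

Lemma Et_integrableZ (c : R) (F : R -> R) : Et_integrable F ->
  Et_integrable (fun t => c * F t).
Proof.
move=> iF; rewrite /Et_integrable.
by apply: (eq_integrable_EFin m0T _ (integrable_EFinZl m0T c iF)) => t _; rewrite mulrCA.
Qed.

Lemma EtD (F G : R -> R) : Et_integrable F -> Et_integrable G ->
  Et pt T (fun t => F t + G t) = Et pt T F + Et pt T G.
Proof.
move=> iF iG; rewrite /Et -RintegralD //.
by apply: eq_Rintegral => t _; rewrite mulrDr.
Qed.

Lemma EtZ (c : R) (F : R -> R) : Et_integrable F ->
  Et pt T (fun t => c * F t) = c * Et pt T F.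
Proof.
move=> iF; rewrite /Et -RintegralZl //.
by apply: eq_Rintegral => t _; rewrite mulrCA.
Qed.

Lemma Et_integrable1 : Et_integrable (fun=> 1).
Proof.
apply/integrableP; split.
  by apply/measurable_EFinP; apply: measurable_funM => //; exact: measurable_funTS.
under eq_integral do rewrite /= mulr1 ger0_norm //.
by rewrite pt_int1 ltry.
Qed.

Lemma Et_cst (c : R) : Et pt T (fun=> c) = c.
Proof.
have Et1 : Et pt T (fun=> 1) = 1.
  by rewrite /Et /Rintegral; under eq_integral do rewrite mulr1; rewrite pt_int1.
rewrite -[in RHS](mulr1 c) -Et1 -(EtZ c Et_integrable1).
by apply: eq_Et => t _; rewrite mulr1.
Qed.

Lemma Et_integrable_bounded (F : R -> R) (c : R) :
  measurable_fun setT F -> (forall t, `|F t| <= c) -> Et_integrable F.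
Proof.
move=> mF Fc; apply: le_integrable (Et_integrableZ c Et_integrable1) => //.
  by apply/measurable_EFinP; apply: measurable_funM; exact: measurable_funTS.
move=> t _; rewrite /= lee_fin mulr1 !normrM ler_wpM2l //.
by rewrite (le_trans (Fc t)) // ler_norm.
Qed.

Lemma Et_integrable_cst (c : R) : Et_integrable (fun=> c).
Proof.
by apply: eq_Et_integrable (Et_integrableZ c Et_integrable1) => t _; rewrite mulr1.
Qed.

Definition Ete (F : R -> R) : \bar R :=
  (\int[lebesgue_measure]_(t in `[0%R, T]) (pt t * F t)%:E)%E.

Lemma Ete_ge0 (F : R -> R) : (forall t, 0 <= F t) -> (0 <= Ete F)%E.
Proof. by move=> F0; apply: integral_ge0 => t _; rewrite lee_fin mulr_ge0. Qed.

Lemma Et_integrable_Ete (F : R -> R) : measurable_fun setT F -> (forall t, 0 <= F t) ->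
  (Ete F < +oo)%E -> Et_integrable F.
Proof.
move=> mF F0 fin; apply/integrableP; split.
  by apply/measurable_EFinP; apply: measurable_funM; exact: measurable_funTS.
by under eq_integral do rewrite /= ger0_norm ?mulr_ge0 //.
Qed.

Lemma EteD (F G : R -> R) : measurable_fun setT F -> measurable_fun setT G ->
  (forall t, 0 <= F t) -> (forall t, 0 <= G t) ->
  Ete (fun t => F t + G t) = (Ete F + Ete G)%E.
Proof.
move=> mF mG F0 G0; rewrite /Ete -ge0_integralD //.
- by apply: eq_integral => t _; rewrite mulrDr EFinD.
- by move=> t _; rewrite lee_fin mulr_ge0.
- by apply/measurable_EFinP; apply: measurable_funM; exact: measurable_funTS.
- by move=> t _; rewrite lee_fin mulr_ge0.
- by apply/measurable_EFinP; apply: measurable_funM; exact: measurable_funTS.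
Qed.

Lemma Ete_Et (F : R -> R) : Et_integrable F -> Ete F = (Et pt T F)%:E.
Proof. by move=> iF; rewrite fineK // (integrable_fin_num m0T iF). Qed.

Variables (w : R -> R) (c : R).
Hypotheses (w_measurable : measurable_fun setT w) (w_bounded : forall t, `|w t| <= c).

Lemma Et_integrable_weightX k : Et_integrable (fun t => w t ^+ k).
Proof.
apply: (Et_integrable_bounded (c := c ^+ k)) => [|t]; first exact: measurable_funX.
by rewrite normrX lerXn2r ?nnegrE // (le_trans _ (w_bounded t)).
Qed.

Lemma Et_integrable_weight : Et_integrable w.
Proof. by apply: eq_Et_integrable (Et_integrable_weightX 1) => t _; rewrite expr1. Qed.

Lemma Et_integrable_weight_poly (c0 c1 c2 : R) :
  Et_integrable (fun t => c0 + c1 * w t + c2 * w t ^+ 2).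
Proof.
apply: Et_integrableD; last exact/Et_integrableZ/Et_integrable_weightX.
exact/Et_integrableD/Et_integrableZ/Et_integrable_weight/Et_integrable_cst.
Qed.

Lemma Et_weight_poly (c0 c1 c2 : R) :
  Et pt T (fun t => c0 + c1 * w t + c2 * w t ^+ 2)
  = c0 + c1 * Et pt T w + c2 * Et pt T (fun t => w t ^+ 2).
Proof.
have i1 := Et_integrableZ c1 Et_integrable_weight.
have i2 := Et_integrableZ c2 (Et_integrable_weightX 2).
rewrite EtD //; last exact: Et_integrableD (Et_integrable_cst c0) i1.
rewrite EtD ?Et_integrable_cst // Et_cst (EtZ c1 Et_integrable_weight).
by rewrite (EtZ c2 (Et_integrable_weightX 2)).
Qed.

Hypothesis Et_w : Et pt T w = 1.

Lemma Et_weight_quadratic (c0 c1 c2 : R) :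
  Et pt T (fun t => c0 + c1 * w t + c2 * w t ^+ 2) = c0 + c1 + c2 * (1 + Vt pt T w).
Proof.
have Vt_w : Vt pt T w = Et pt T (fun t => w t ^+ 2) - 1.
  rewrite /Vt Et_w (eq_Et (G := fun t => 1 + (- 2) * w t + 1 * w t ^+ 2)).
    by rewrite Et_weight_poly Et_w; ring.
  by move=> t _; ring.
by rewrite Et_weight_poly Et_w Vt_w; ring.
Qed.

End time_expectation.

Section iid_mean.
Variables (R : realType) (dX : measure_display) (X : measurableType dX) (A : finType).
Variables (px : probability X R) (pt : R -> R) (T : R) (pi0 : X -> R -> A -> R)
  (Pr : A -> R.-pker (X * R)%type ~> R).
Local Notation ED := (ED px pt T pi0 Pr).

Lemma eq_ED k (h1 h2 : seq (sample R X A) -> R) :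
  (forall D, size D = k -> h1 D = h2 D) -> ED k h1 = ED k h2.
Proof.
elim: k h1 h2 => [|k IH] h1 h2 h12 /=; first exact: h12.
by congr E1; apply/funext => s; apply: IH => D sD; apply: h12; rewrite /= sD.
Qed.

Variables (Y : sample R X A -> R) (M1 M2 : R).
Hypothesis E1_quadratic : forall al be ga,
  E1 px pt T pi0 Pr (fun s => al + be * Y s + ga * Y s ^+ 2) = al + be * M1 + ga * M2.

Lemma ED_sum_quadratic k (al be ga : R) :
  ED k (fun D => al + be * \sum_(s <- D) Y s + ga * (\sum_(s <- D) Y s) ^+ 2) =
  al + be * (k%:R * M1) + ga * (k%:R * M2 + k%:R * (k%:R - 1) * M1 ^+ 2).
Proof.
elim: k al be ga => [|k IH] al be ga /=; first by rewrite big_nil; ring.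
rewrite (_ : (fun s => _) = fun s => (al + be * (k%:R * M1)
    + ga * (k%:R * M2 + k%:R * (k%:R - 1) * M1 ^+ 2))
  + (be + 2 * ga * (k%:R * M1)) * Y s + ga * Y s ^+ 2).
  by rewrite E1_quadratic -addn1 natrD; ring.
apply/funext => s.
rewrite (_ : (fun D => _) = fun D => (al + be * Y s + ga * Y s ^+ 2)
    + (be + 2 * ga * Y s) * \sum_(s <- D) Y s + ga * (\sum_(s <- D) Y s) ^+ 2).
  by rewrite IH; ring.
by apply/funext => D; rewrite big_cons; ring.
Qed.

Lemma VD_empirical_mean n : (0 < n)%N ->
  n%:R * VD px pt T pi0 Pr n (fun D => (size D)%:R^-1 * \sum_(s <- D) Y s)
  = M2 - M1 ^+ 2.
Proof.
move=> n0; have nz : (n%:R : R) != 0 by rewrite pnatr_eq0 -lt0n.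
have mean : ED n (fun D => (size D)%:R^-1 * \sum_(s <- D) Y s) = M1.
  rewrite (eq_ED (h2 := fun D => 0 + n%:R^-1 * \sum_(s <- D) Y s
    + 0 * (\sum_(s <- D) Y s) ^+ 2)); first by rewrite ED_sum_quadratic; field.
  by move=> D ->; ring.
rewrite /VD mean (eq_ED (h2 := fun D => M1 ^+ 2 + (- 2 * M1 * n%:R^-1) * \sum_(s <- D) Y s
  + n%:R^-2 * (\sum_(s <- D) Y s) ^+ 2)); first by rewrite ED_sum_quadratic; field.
by move=> D ->; field.
Qed.

End iid_mean.

Section space_expectation.
Variables (R : realType) (dX : measure_display) (X : measurableType dX).
Variable px : probability X R.
Local Notation integrable f := (px.-integrable setT (EFin \o f)).

Lemma ExD (f g : X -> R) : integrable f -> integrable g ->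
  Ex px (fun x => f x + g x) = Ex px f + Ex px g.
Proof. exact: RintegralD. Qed.

Lemma ExZ (c : R) (f : X -> R) : integrable f -> Ex px (fun x => c * f x) = c * Ex px f.
Proof. exact: RintegralZl. Qed.

Lemma Ex_cst (c : R) : Ex px (fun=> c) = c.
Proof.
rewrite /Ex Rintegral_cst //; transitivity (c * fine (1%E : \bar R)); last by rewrite mulr1.
by congr (c * fine _); exact: probability_setT.
Qed.

Lemma integrable_of_sq (f : X -> R) : measurable_fun setT f ->
  integrable (fun x => f x ^+ 2) -> integrable f.
Proof.
move=> mf if2.
have i1f2 := integrable_EFinD measurableT (finite_measure_integrable_cst px 1 measurableT) if2.
apply: le_integrable i1f2 => //; first exact/measurable_EFinP.
move=> x _; rewrite /= lee_fin (le_trans _ (ler_norm _)) //.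
have := sqr_ge0 (`|f x| - 1); have := normr_ge0 (f x).
by rewrite -[f x ^+ 2]real_normK ?num_real //; nra.
Qed.

Lemma VxE (f : X -> R) : integrable f -> integrable (fun x => f x ^+ 2) ->
  Vx px f = Ex px (fun x => f x ^+ 2) - Ex px f ^+ 2.
Proof.
move=> if1 if2; set m := Ex px f.
have ilin : integrable (fun x => - 2 * m * f x + m ^+ 2).
  exact: integrable_EFinD (integrable_EFinZl _ _ if1) (finite_measure_integrable_cst px _ _).
rewrite /Vx -/m (_ : (fun x => _) = fun x => f x ^+ 2 + (- 2 * m * f x + m ^+ 2)).
  rewrite ExD // ExD; [|exact: integrable_EFinZl|exact: finite_measure_integrable_cst].
  by rewrite ExZ // Ex_cst -/m; ring.
by apply/funext => x; ring.
Qed.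

End space_expectation.

Section opfv_moments.
Variables (R : realType) (dX : measure_display) (X : measurableType dX)
  (A : finType) (L : eqType) (d : nat) (j : 'I_d)
  (px : probability X R) (T : R) (pt : R -> R) (t' : R) (phi : R -> L)
  (pi0 : X -> R -> A -> R) (pi : 'rV[R]_d -> X -> R -> A -> R) (zeta : 'rV[R]_d)
  (Pr : A -> R.-pker (X * R)%type ~> R) (rmax : R) (fhat : X -> R -> A -> R).

Hypothesis reward_bounded : forall a x t, Pr a (x, t) `[0, rmax]%classic = 1%E.
Hypothesis pt_measurable : measurable_fun setT pt.
Hypothesis pt_ge0 : forall t, 0 <= pt t.
Hypothesis pt_int1 : (\int[lebesgue_measure]_(t in `[0%R, T]%classic) (pt t)%:E = 1)%E.
Hypothesis phi_measurable : measurable [set s : R | phi s = phi t'].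
Hypothesis pi0_ge0 : forall x t a, 0 <= pi0 x t a.
Hypothesis pi0_sum1 : forall x t, \sum_a pi0 x t a = 1.
Hypothesis pi0_measurable :
  forall a, measurable_fun setT (fun xt : X * R => pi0 xt.1 xt.2 a).
Hypothesis pi_measurable : forall a, measurable_fun setT (fun x => pi zeta x t' a).
Hypothesis score_measurable :
  forall a, measurable_fun setT (fun x => score pi zeta j x t' a).
Hypothesis fhat'_measurable : forall a, measurable_fun setT (fun x => fhat x t' a).
Hypothesis pi0_gt0 : forall x t a, 0 <= t <= T -> 0 < pi0 x t a.
Hypothesis pphi_gt0 : 0 < pphi pt T phi t'.
Hypothesis shift_invariance : forall x a t, 0 <= t <= T -> indphi phi t t' = 1 ->
  qmean Pr x t a - qmean Pr x t' a = fhat x t a - fhat x t' a.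

Local Notation s := (score pi zeta j).
Local Notation q := (qmean Pr).

Definition weight t := indphi phi t t' / pphi pt T phi t'.
Definition ratio x t a := pi zeta x t' a / pi0 x t a.
Definition summand := opfv_term pt T phi t' pi zeta j pi0 fhat.
Definition Epi_fhat x := Epol (pi zeta) x t' (fun a => fhat x t' a * s x t' a).
Definition Epi_resid x := Epol (pi zeta) x t' (fun a => (q x t' a - fhat x t' a) * s x t' a).
Definition Epi_q x := Epol (pi zeta) x t' (fun a => q x t' a * s x t' a).
Definition ipw_resid x t a := ratio x t a * (q x t' a - fhat x t' a) * s x t' a.
Definition noise_term x t :=
  Epol pi0 x t (fun a => (weight t * ratio x t a * s x t' a) ^+ 2 * sigma2 Pr x t a).
Definition action_term x t := weight t ^+ 2 * Vpol pi0 x t (ipw_resid x t).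
Definition cond_mean x t := weight t * Epi_resid x + Epi_fhat x.
Definition cond_second_moment x t := noise_term x t + action_term x t + cond_mean x t ^+ 2.

Lemma indphi_01 t : indphi phi t t' = 0 \/ indphi phi t t' = 1.
Proof. by rewrite /indphi; case: (_ == _); [right|left]. Qed.

Lemma weight_measurable : measurable_fun setT weight.
Proof.
apply: measurable_funM => //.
rewrite (_ : (fun t => _) = \1_[set u | phi u = phi t']); first exact: measurable_indic.
apply/funext => t; rewrite /indphi indicE.
have [e|ne] := eqVneq (phi t) (phi t'); first by rewrite mem_set.
by rewrite memNset //= => /eqP; rewrite (negbTE ne).
Qed.

Lemma weight_bounded t : `|weight t| <= (pphi pt T phi t')^-1.
Proof.
have ip0 : 0 <= (pphi pt T phi t')^-1 by rewrite invr_ge0 ltW.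
by rewrite /weight; case: (indphi_01 t) => ->; rewrite ?mul0r ?mul1r ?normr0 ?ger0_norm.
Qed.

Let weight_integrable : Et_integrable pt T weight.
Proof.
apply: (Et_integrable_bounded pt_measurable pt_ge0 pt_int1 weight_measurable).
exact: weight_bounded.
Qed.

Lemma Et_weight : Et pt T weight = 1.
Proof.
have p0 : pphi pt T phi t' != 0 by rewrite gt_eqF.
apply: (mulfI p0); rewrite mulr1 -(EtZ _ weight_integrable) {2}/pphi.
by apply: eq_Et => t _; rewrite /weight mulrCA mulfV // mulr1.
Qed.

Lemma summand_affine x t a r :
  summand (x, t, a, r) = (Epi_fhat x - weight t * ratio x t a * s x t' a * fhat x t a)
                         + weight t * ratio x t a * s x t' a * r.
Proof. by rewrite /summand /opfv_term /Epi_fhat /weight /ratio; ring. Qed.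

(* The only use of Delta_q = Delta_fhat: where w(t) <> 0, the residual q - fhat at time t
   equals the one at t'. *)
Lemma weighted_residual_shift x t a : 0 <= t <= T ->
  weight t * ratio x t a * s x t' a * (q x t a - fhat x t a) = weight t * ipw_resid x t a.
Proof.
move=> tT; rewrite /ipw_resid /weight; case: (indphi_01 t) => h; rewrite h ?mul0r //.
have -> : q x t a - fhat x t a = q x t' a - fhat x t' a.
  by have := shift_invariance x a tT h; lra.
by ring.
Qed.

Lemma Er_summand_quadratic x t a (al be ga : R) : 0 <= t <= T ->
  Er Pr a x t (fun r => al + be * summand (x, t, a, r) + ga * summand (x, t, a, r) ^+ 2)
  = al + be * (weight t * ipw_resid x t a + Epi_fhat x)
    + ga * ((weight t * ipw_resid x t a + Epi_fhat x) ^+ 2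
            + (weight t * ratio x t a * s x t' a) ^+ 2 * sigma2 Pr x t a).
Proof.
move=> tT; set K := weight t * ratio x t a * s x t' a.
have -> : weight t * ipw_resid x t a + Epi_fhat x
          = (Epi_fhat x - K * fhat x t a) + K * q x t a.
  by rewrite -(weighted_residual_shift x a tT) -/K; ring.
rewrite /Er (@eq_Rintegral _ _ _ (Pr a (x, t)) setT
  (fun r => al + be * ((Epi_fhat x - K * fhat x t a) + K * r)
          + ga * ((Epi_fhat x - K * fhat x t a) + K * r) ^+ 2)); last first.
  by move=> r _; rewrite summand_affine.
exact: (Rintegral_affine_moments (@prob_kernel _ _ _ _ _ (Pr a) (x, t))
  (reward_bounded a x t)).
Qed.

Lemma Epol_ipw_resid x t : 0 <= t <= T -> Epol pi0 x t (ipw_resid x t) = Epi_resid x.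
Proof.
move=> tT; apply: eq_bigr => a _.
have p0 : pi0 x t a != 0 by rewrite gt_eqF // pi0_gt0.
by rewrite /ipw_resid /ratio; field.
Qed.

Lemma cond_summand_quadratic x t (al be ga : R) : 0 <= t <= T ->
  Epol pi0 x t (fun a => Er Pr a x t
    (fun r => al + be * summand (x, t, a, r) + ga * summand (x, t, a, r) ^+ 2))
  = al + be * cond_mean x t + ga * cond_second_moment x t.
Proof.
move=> tT; rewrite (_ : (fun a => _) = fun a =>
    al + be * (weight t * ipw_resid x t a + Epi_fhat x)
  + ga * ((weight t * ipw_resid x t a + Epi_fhat x) ^+ 2
          + (weight t * ratio x t a * s x t' a) ^+ 2 * sigma2 Pr x t a)).
  by rewrite Epol_affine_moments // Epol_ipw_resid.
by apply/funext => a; rewrite Er_summand_quadratic.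
Qed.

Let fst_measurable (f : X -> R) : measurable_fun setT f ->
  measurable_fun setT (fun xt : X * R => f xt.1).
Proof. by move=> mf; exact: measurableT_comp mf measurable_fst. Qed.

Let snd_measurable (f : R -> R) : measurable_fun setT f ->
  measurable_fun setT (fun xt : X * R => f xt.2).
Proof. by move=> mf; exact: measurableT_comp mf measurable_snd. Qed.

Lemma q_measurable a : measurable_fun setT (fun xt : X * R => q xt.1 xt.2 a).
Proof.
rewrite (_ : (fun xt => _) = fun xt => \int[Pr a xt]_r r); last by apply/funext => -[].
exact: measurable_Rintegral_kernel.
Qed.

Lemma sigma2_measurable a :
  measurable_fun setT (fun xt : X * R => sigma2 Pr xt.1 xt.2 a).
Proof.
rewrite (_ : (fun xt => _) = fun xt => \int[Pr a xt]_r (r ^+ 2) - q xt.1 xt.2 a ^+ 2).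
  apply: measurable_funB; last by apply: measurable_funX; exact: q_measurable.
  by apply: measurable_Rintegral_kernel; exact: measurable_funX.
apply/funext => -[x t] /=.
exact: (Rintegral_variance (@prob_kernel _ _ _ _ _ (Pr a) (x, t)) (reward_bounded a x t)).
Qed.

Lemma q'_measurable a : measurable_fun setT (fun x => q x t' a).
Proof. exact: measurable_fun_pair1 (q_measurable a). Qed.

Lemma ratio_measurable a :
  measurable_fun setT (fun xt : X * R => ratio xt.1 xt.2 a).
Proof.
apply: measurable_funM; first exact: fst_measurable (pi_measurable a).
exact: measurableT_comp (@inv_measurable R) (pi0_measurable a).
Qed.

Lemma Epi_fhat_measurable : measurable_fun setT Epi_fhat.
Proof. by apply: measurable_sum => a; do 2 apply: measurable_funM => //. Qed.

Lemma Epi_resid_measurable : measurable_fun setT Epi_resid.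
Proof.
apply: measurable_sum => a; do 2 apply: measurable_funM => //.
exact: measurable_funB (q'_measurable a) _.
Qed.

Lemma Epi_q_measurable : measurable_fun setT Epi_q.
Proof.
by apply: measurable_sum => a; do 2 apply: measurable_funM => //; exact: q'_measurable.
Qed.

Lemma noise_term_measurable :
  measurable_fun setT (fun xt : X * R => noise_term xt.1 xt.2).
Proof.
apply: measurable_sum => a; apply: measurable_funM => //.
apply: measurable_funM; last exact: sigma2_measurable.
apply: measurable_funX; apply: measurable_funM.
  by apply: measurable_funM; [exact: snd_measurable weight_measurable|exact: ratio_measurable].
exact: fst_measurable (score_measurable a).
Qed.

Lemma ipw_resid_measurable a :
  measurable_fun setT (fun xt : X * R => ipw_resid xt.1 xt.2 a).
Proof.
apply: measurable_funM; last exact: fst_measurable (score_measurable a).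
apply: measurable_funM; first exact: ratio_measurable.
exact: fst_measurable (measurable_funB (q'_measurable a) (fhat'_measurable a)).
Qed.

Lemma action_term_measurable :
  measurable_fun setT (fun xt : X * R => action_term xt.1 xt.2).
Proof.
apply: measurable_funM.
  by apply: measurable_funX; exact: snd_measurable weight_measurable.
apply: measurable_sum => a; apply: measurable_funM => //.
apply: measurable_funX; apply: measurable_funB; first exact: ipw_resid_measurable.
by apply: measurable_sum => b; apply: measurable_funM => //; exact: ipw_resid_measurable.
Qed.

Lemma cond_mean_measurable :
  measurable_fun setT (fun xt : X * R => cond_mean xt.1 xt.2).
Proof.
apply: measurable_funD; last exact: fst_measurable Epi_fhat_measurable.
apply: measurable_funM; first exact: snd_measurable weight_measurable.
exact: fst_measurable Epi_resid_measurable.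
Qed.

Lemma cond_second_moment_measurable :
  measurable_fun setT (fun xt : X * R => cond_second_moment xt.1 xt.2).
Proof.
apply: measurable_funD; last by apply: measurable_funX; exact: cond_mean_measurable.
exact: measurable_funD noise_term_measurable action_term_measurable.
Qed.

Lemma noise_term_ge0 x t : 0 <= noise_term x t.
Proof.
apply: sumr_ge0 => a _; apply: mulr_ge0 => //; apply: mulr_ge0; first exact: sqr_ge0.
by apply: Rintegral_ge0 => r _; exact: sqr_ge0.
Qed.

Lemma action_term_ge0 x t : 0 <= action_term x t.
Proof. by rewrite mulr_ge0 ?sqr_ge0 //; apply: sumr_ge0 => a _; rewrite mulr_ge0 ?sqr_ge0. Qed.

Lemma Epi_q_split x : Epi_q x = Epi_resid x + Epi_fhat x.
Proof.
by rewrite /Epi_q /Epi_resid /Epi_fhat /Epol -big_split; apply: eq_bigr => a _ /=; ring.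
Qed.

Definition Et_cond_mean_sq x := Vt pt T weight * Epi_resid x ^+ 2 + Epi_q x ^+ 2.

Let cond_mean_poly x (al be ga : R) t :
  al + be * cond_mean x t + ga * cond_mean x t ^+ 2
  = (al + be * Epi_fhat x + ga * Epi_fhat x ^+ 2)
    + (be * Epi_resid x + 2 * ga * Epi_resid x * Epi_fhat x) * weight t
    + (ga * Epi_resid x ^+ 2) * weight t ^+ 2.
Proof. by rewrite /cond_mean; ring. Qed.

Let cond_mean_int x (al be ga : R) :
  Et_integrable pt T (fun t => al + be * cond_mean x t + ga * cond_mean x t ^+ 2).
Proof.
apply: eq_Et_integrable (Et_integrable_weight_poly pt_measurable pt_ge0 pt_int1
  weight_measurable weight_bounded _ _ _) => t _.
by rewrite cond_mean_poly.
Qed.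

Lemma Et_cond_mean_poly x (al be ga : R) :
  Et pt T (fun t => al + be * cond_mean x t + ga * cond_mean x t ^+ 2)
  = al + be * Epi_q x + ga * Et_cond_mean_sq x.
Proof.
rewrite (eq_Et pt (fun t _ => cond_mean_poly x al be ga t)).
rewrite (Et_weight_quadratic pt_measurable pt_ge0 pt_int1 weight_measurable
  weight_bounded Et_weight) /Et_cond_mean_sq Epi_q_split; ring.
Qed.

Lemma Et_cond_quadratic x (al be ga : R) :
  Et_integrable pt T (noise_term x) -> Et_integrable pt T (action_term x) ->
  Et pt T (fun t => al + be * cond_mean x t + ga * cond_second_moment x t)
  = al + be * Epi_q x
    + ga * (Et pt T (noise_term x) + Et pt T (action_term x) + Et_cond_mean_sq x).
Proof.
move=> i1 i2; have iZ1 := Et_integrableZ ga i1; have iZ2 := Et_integrableZ ga i2.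
rewrite (eq_Et pt (G := fun t => (al + be * cond_mean x t + ga * cond_mean x t ^+ 2)
  + (ga * noise_term x t + ga * action_term x t))); last first.
  by move=> t _; rewrite /cond_second_moment; ring.
rewrite EtD //; last exact: Et_integrableD.
by rewrite Et_cond_mean_poly EtD // !EtZ //; ring.
Qed.

Lemma integrable_summand_sq x t a :
  (Pr a (x, t)).-integrable setT (EFin \o (fun r => summand (x, t, a, r) ^+ 2)).
Proof.
set K := weight t * ratio x t a * s x t' a; set B := Epi_fhat x - K * fhat x t a.
have iq := integrable_quadratic (@prob_kernel _ _ _ _ _ (Pr a) (x, t))
  (reward_bounded a x t) (B ^+ 2) (2 * B * K) (K ^+ 2).
apply: (eq_integrable_EFin measurableT _ iq).
by move=> r _; rewrite summand_affine -/K -/B; ring.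
Qed.

Lemma cond_summand_second_moment x t : 0 <= t <= T ->
  Epol pi0 x t (fun a => Er Pr a x t (fun r => summand (x, t, a, r) ^+ 2))
  = cond_second_moment x t.
Proof.
move=> tT; rewrite (_ : cond_second_moment x t
  = 0 + 0 * cond_mean x t + 1 * cond_second_moment x t); last by ring.
rewrite -cond_summand_quadratic //; congr Epol; apply/funext => a.
by congr Er; apply/funext => r; ring.
Qed.

Lemma Ete_cond_second_moment x : Ete pt T (cond_second_moment x)
  = (Ete pt T (noise_term x) + Ete pt T (action_term x) + (Et_cond_mean_sq x)%:E)%E.
Proof.
have mn := measurable_fun_pair2 x noise_term_measurable.
have ma := measurable_fun_pair2 x action_term_measurable.
have mm2 : measurable_fun setT (fun t => cond_mean x t ^+ 2).
  by apply: measurable_funX; exact: measurable_fun_pair2 x cond_mean_measurable.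
rewrite /cond_second_moment (EteD _ pt_measurable pt_ge0) //; last 3 first.
- exact: measurable_funD.
- by move=> t; rewrite addr_ge0 ?noise_term_ge0 ?action_term_ge0.
- by move=> t; exact: sqr_ge0.
rewrite (EteD _ pt_measurable pt_ge0) //; [|exact: noise_term_ge0|exact: action_term_ge0].
congr (_ + _)%E; rewrite Ete_Et; last first.
  by apply: eq_Et_integrable (cond_mean_int x 0 0 1) => t _; ring.
rewrite (_ : Et_cond_mean_sq x = 0 + 0 * Epi_q x + 1 * Et_cond_mean_sq x); last by ring.
by rewrite -Et_cond_mean_poly; congr EFin; apply: eq_Et => t _; ring.
Qed.

Lemma E1e_summand_sq : E1e px pt T pi0 Pr (fun s => (summand s ^+ 2)%:E)
  = (\int[px]_x (Ete pt T (noise_term x) + Ete pt T (action_term x)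
                 + (Et_cond_mean_sq x)%:E))%E.
Proof.
apply: eq_integral => x _; rewrite -Ete_cond_second_moment.
apply: eq_integral => t; rewrite inE /= in_itv /= => tT.
rewrite -cond_summand_second_moment // EFinM /Epol -sumEFin; congr (_ * _)%E.
apply: eq_bigr => a _; rewrite EFinM /Er /Rintegral fineK //.
exact: integrable_fin_num (integrable_summand_sq x t a).
Qed.

Hypothesis summand_sq_finite :
  (E1e px pt T pi0 Pr (fun s => (summand s ^+ 2)%:E) < +oo)%E.

Lemma Vt_weight_ge0 : 0 <= Vt pt T weight.
Proof. by apply: Rintegral_ge0 => t _; rewrite mulr_ge0 ?sqr_ge0. Qed.

Lemma Et_cond_mean_sq_ge0 x : 0 <= Et_cond_mean_sq x.
Proof.
by rewrite /Et_cond_mean_sq addr_ge0 ?sqr_ge0 // mulr_ge0 ?sqr_ge0 // Vt_weight_ge0.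
Qed.

Lemma Et_cond_mean_sq_measurable : measurable_fun setT Et_cond_mean_sq.
Proof.
apply: measurable_funD; last by apply: measurable_funX; exact: Epi_q_measurable.
by apply: measurable_funM => //; apply: measurable_funX; exact: Epi_resid_measurable.
Qed.

Let Ete_measurable (F : X -> R -> R) :
  measurable_fun setT (fun xt : X * R => F xt.1 xt.2) -> (forall x t, 0 <= F x t) ->
  measurable_fun setT (fun x => Ete pt T (F x)).
Proof.
move=> mF F0; apply: (measurable_integral_param lebesgue_measure (measurable_itv _)).
  apply/measurable_EFinP; apply: measurable_funM => //.
  exact: measurableT_comp pt_measurable measurable_snd.
by move=> x t; rewrite lee_fin mulr_ge0.
Qed.

Let Ete_noise_ge0 x : (0 <= Ete pt T (noise_term x))%E.
Proof. by apply: Ete_ge0 => // t; exact: noise_term_ge0. Qed.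

Let Ete_action_ge0 x : (0 <= Ete pt T (action_term x))%E.
Proof. by apply: Ete_ge0 => // t; exact: action_term_ge0. Qed.

Let second_moment_parts x :=
  (Ete pt T (noise_term x) + Ete pt T (action_term x) + (Et_cond_mean_sq x)%:E)%E.

Let integrable_second_moment_parts : px.-integrable setT second_moment_parts.
Proof.
have mn := Ete_measurable noise_term_measurable noise_term_ge0.
have ma := Ete_measurable action_term_measurable action_term_ge0.
have tt0 x : (0 <= second_moment_parts x)%E.
  apply: adde_ge0; last by rewrite lee_fin Et_cond_mean_sq_ge0.
  exact: adde_ge0 (Ete_noise_ge0 x) (Ete_action_ge0 x).
apply/integrableP; split.
  apply: emeasurable_funD; first exact: emeasurable_funD.
  exact/measurable_EFinP/Et_cond_mean_sq_measurable.
rewrite (eq_integral second_moment_parts); first by rewrite -E1e_summand_sq.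
by move=> x _; rewrite gee0_abs.
Qed.

Let integrable_le_second_moment_parts (f : X -> \bar R) : measurable_fun setT f ->
  (forall x, 0 <= f x /\ f x <= second_moment_parts x)%E -> px.-integrable setT f.
Proof.
move=> mf f0; apply: le_integrable integrable_second_moment_parts => // x _.
by have [f0' fT] := f0 x; rewrite !gee0_abs // (le_trans f0' fT).
Qed.

Lemma integrable_Ete_noise : px.-integrable setT (fun x => Ete pt T (noise_term x)).
Proof.
apply: integrable_le_second_moment_parts.
  exact: Ete_measurable noise_term_measurable noise_term_ge0.
move=> x; split => //.
by rewrite /second_moment_parts -addeA leeDl // adde_ge0 ?lee_fin ?Et_cond_mean_sq_ge0.
Qed.

Lemma integrable_Ete_action : px.-integrable setT (fun x => Ete pt T (action_term x)).
Proof.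
apply: integrable_le_second_moment_parts.
  exact: Ete_measurable action_term_measurable action_term_ge0.
move=> x; split => //.
rewrite /second_moment_parts (le_trans _ (leeDl _ _)) ?lee_fin ?Et_cond_mean_sq_ge0 //.
exact: leeDr.
Qed.

Lemma integrable_Et_cond_mean_sq : px.-integrable setT (EFin \o Et_cond_mean_sq).
Proof.
apply: integrable_le_second_moment_parts.
  exact/measurable_EFinP/Et_cond_mean_sq_measurable.
move=> x; split; first by rewrite /= lee_fin Et_cond_mean_sq_ge0.
by rewrite /second_moment_parts leeDr // adde_ge0.
Qed.

Lemma integrable_Et_noise : px.-integrable setT (EFin \o (fun x => Et pt T (noise_term x))).
Proof. by have := integrable_fine measurableT integrable_Ete_noise. Qed.

Lemma integrable_Et_action :
  px.-integrable setT (EFin \o (fun x => Et pt T (action_term x))).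
Proof. by have := integrable_fine measurableT integrable_Ete_action. Qed.

Lemma integrable_Epi_q_sq : px.-integrable setT (EFin \o (fun x => Epi_q x ^+ 2)).
Proof.
apply: le_integrable integrable_Et_cond_mean_sq => //.
  by apply/measurable_EFinP; apply: measurable_funX; exact: Epi_q_measurable.
move=> x _; rewrite /= lee_fin !ger0_norm ?sqr_ge0 ?Et_cond_mean_sq_ge0 // lerDr.
by rewrite mulr_ge0 ?sqr_ge0 ?Vt_weight_ge0.
Qed.

Lemma integrable_Vt_Epi_resid_sq :
  px.-integrable setT (EFin \o (fun x => Vt pt T weight * Epi_resid x ^+ 2)).
Proof.
apply: le_integrable integrable_Et_cond_mean_sq => //.
  by apply/measurable_EFinP; apply: measurable_funM => //; apply: measurable_funX;
    exact: Epi_resid_measurable.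
move=> x _; rewrite /= lee_fin !ger0_norm ?Et_cond_mean_sq_ge0 ?lerDl ?sqr_ge0 //.
by rewrite mulr_ge0 ?sqr_ge0 ?Vt_weight_ge0.
Qed.

Lemma integrable_Epi_q : px.-integrable setT (EFin \o Epi_q).
Proof. exact: integrable_of_sq Epi_q_measurable integrable_Epi_q_sq. Qed.

Let Et_measurable (F : X -> R -> R) :
  measurable_fun setT (fun xt : X * R => F xt.1 xt.2) ->
  measurable_fun setT (fun x => Et pt T (F x)).
Proof.
move=> mF; apply: (measurable_Rintegral_param lebesgue_measure (measurable_itv _)).
by apply: measurable_funM => //; exact: measurableT_comp pt_measurable measurable_snd.
Qed.

(* Only an a.e. identity: [Et] is 0 where the noise or action integral diverges, which
   E[Y^2] < +oo confines to a px-null set. *)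
Lemma Ex_Et_cond_quadratic (al be ga : R) :
  Ex px (fun x => Et pt T (fun t => al + be * cond_mean x t + ga * cond_second_moment x t))
  = Ex px (fun x => al + be * Epi_q x
      + ga * (Et pt T (noise_term x) + Et pt T (action_term x) + Et_cond_mean_sq x)).
Proof.
rewrite /Ex /Rintegral; congr fine; apply: ae_eq_integral => //.
- apply/measurable_EFinP; apply: Et_measurable; apply: measurable_funD.
    by apply: measurable_funD => //; apply: measurable_funM => //; exact: cond_mean_measurable.
  by apply: measurable_funM => //; exact: cond_second_moment_measurable.
- apply/measurable_EFinP; apply: measurable_funD.
    by apply: measurable_funD => //; apply: measurable_funM => //; exact: Epi_q_measurable.
  apply: measurable_funM => //; apply: measurable_funD; last exact: Et_cond_mean_sq_measurable.
  by apply: measurable_funD; apply: Et_measurable;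
    [exact: noise_term_measurable|exact: action_term_measurable].
apply: filterS2 (integrable_ae measurableT integrable_Ete_noise)
  (integrable_ae measurableT integrable_Ete_action) => x n_fin a_fin _.
congr EFin; apply: Et_cond_quadratic; apply: Et_integrable_Ete => //.
- exact: measurable_fun_pair2 x noise_term_measurable.
- exact: noise_term_ge0.
- by rewrite ltey_eq n_fin.
- exact: measurable_fun_pair2 x action_term_measurable.
- exact: action_term_ge0.
- by rewrite ltey_eq a_fin.
Qed.

Definition mean_summand := Ex px Epi_q.
Definition second_moment_summand :=
  Ex px (fun x => Et pt T (noise_term x) + Et pt T (action_term x) + Et_cond_mean_sq x).

Lemma E1_summand_quadratic (al be ga : R) :
  E1 px pt T pi0 Pr (fun s => al + be * summand s + ga * summand s ^+ 2)
  = al + be * mean_summand + ga * second_moment_summand.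
Proof.
transitivity (Ex px (fun x =>
  Et pt T (fun t => al + be * cond_mean x t + ga * cond_second_moment x t))).
  by congr Ex; apply/funext => x; apply: eq_Et => t tT; exact: cond_summand_quadratic.
have iS : px.-integrable setT (EFin \o (fun x =>
    Et pt T (noise_term x) + Et pt T (action_term x) + Et_cond_mean_sq x)).
  apply: integrable_EFinD => //; last exact: integrable_Et_cond_mean_sq.
  by apply: integrable_EFinD => //; [exact: integrable_Et_noise|exact: integrable_Et_action].
have iq := integrable_Epi_q.
have iZq := integrable_EFinZl measurableT be iq.
rewrite Ex_Et_cond_quadratic ExD; last exact: integrable_EFinZl.
  by rewrite ExD ?ExZ ?Ex_cst //; exact: finite_measure_integrable_cst.
by apply: integrable_EFinD => //; exact: finite_measure_integrable_cst.
Qed.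

Lemma summand_variance_decomposition :
  second_moment_summand - mean_summand ^+ 2
  = Ex px (fun x => Et pt T (noise_term x)) + Ex px (fun x => Et pt T (action_term x))
    + Vt pt T weight * Ex px (fun x => Epi_resid x ^+ 2) + Vx px Epi_q.
Proof.
have Vt_Ex : Vt pt T weight * Ex px (fun x => Epi_resid x ^+ 2)
    = Ex px (fun x => Vt pt T weight * Epi_resid x ^+ 2).
  have [->|v0] := eqVneq (Vt pt T weight) 0.
    by rewrite mul0r (_ : (fun x => _) = fun=> 0) ?Ex_cst //; apply/funext => x; rewrite mul0r.
  rewrite ExZ //; apply: (eq_integrable_EFin measurableT _
    (integrable_EFinZl measurableT (Vt pt T weight)^-1 integrable_Vt_Epi_resid_sq)).
  by move=> x _; rewrite mulrA mulVf // mul1r.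
rewrite Vt_Ex (VxE integrable_Epi_q integrable_Epi_q_sq) /second_moment_summand /mean_summand.
rewrite ExD; last 2 first.
- exact: integrable_EFinD integrable_Et_noise integrable_Et_action.
- exact: integrable_Et_cond_mean_sq.
rewrite ExD ?integrable_Et_noise ?integrable_Et_action //.
by rewrite /Et_cond_mean_sq ExD ?integrable_Vt_Epi_resid_sq ?integrable_Epi_q_sq //; ring.
Qed.

Lemma opfv_grad_variance n : (0 < n)%N ->
  n%:R * VD px pt T pi0 Pr n (opfv_grad pt T phi t' pi zeta j pi0 fhat)
  = Ex px (fun x => Et pt T (noise_term x)) + Ex px (fun x => Et pt T (action_term x))
    + Vt pt T weight * Ex px (fun x => Epi_resid x ^+ 2) + Vx px Epi_q.
Proof.
by move=> n0; rewrite (VD_empirical_mean E1_summand_quadratic n0) summand_variance_decomposition.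
Qed.

End opfv_moments.

Theorem propositionF4 (R : realType) (dX : measure_display) (X : measurableType dX)
  (A : finType) (L : eqType) (d : nat) (j : 'I_d)
  (px : probability X R) (T : R) (pt : R -> R) (t' : R) (phi : R -> L)
  (pi0 : X -> R -> A -> R) (pi : 'rV[R]_d -> X -> R -> A -> R) (zeta : 'rV[R]_d)
  (Pr : A -> R.-pker (X * R)%type ~> R) (rmax : R) (fhat : X -> R -> A -> R)
  (n : nat) :
  (* sample size, target time *)
  (0 < n)%N -> T < t' ->
  (* rewards in [0, rmax] *)
  (forall a x t, Pr a (x, t) `[0, rmax]%classic = 1%E) ->
  (* p(t): a probability density on [0, T] *)
  measurable_fun setT pt -> (forall t, 0 <= pt t) ->
  (\int[lebesgue_measure]_(t in `[0%R, T]%classic) (pt t)%:E = 1)%E ->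
  measurable [set s : R | phi s = phi t'] ->
  (* logging policy *)
  (forall x t a, 0 <= pi0 x t a) -> (forall x t, \sum_a pi0 x t a = 1) ->
  (forall a, measurable_fun setT (fun xt : X * R => pi0 xt.1 xt.2 a)) ->
  (* evaluation policy, differentiable in zeta *)
  (forall z x t a, 0 <= pi z x t a) -> (forall z x t, \sum_a pi z x t a = 1) ->
  (forall x t a, differentiable (fun z => pi z x t a) zeta) ->
  (forall a, measurable_fun setT (fun x => pi zeta x t' a)) ->
  (forall a, measurable_fun setT (fun x => score pi zeta j x t' a)) ->
  (* regressor *)
  (forall a, measurable_fun setT (fun xt : X * R => fhat xt.1 xt.2 a)) ->
  (forall a, measurable_fun setT (fun x => fhat x t' a)) ->
  (* finite second moment of a single summand of the estimator *)
  (E1e px pt T pi0 Pr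
     (fun s => ((opfv_term pt T phi t' pi zeta j pi0 fhat s) ^+ 2)%:E) < +oo)%E ->
  (* assumptions of the proposition *)
  (forall x t a, 0 <= t <= T -> 0 < pi0 x t a) ->
  0 < pphi pt T phi t' ->
  (forall x a t, 0 <= t <= T -> indphi phi t t' = 1 ->
     qmean Pr x t a - qmean Pr x t' a = fhat x t a - fhat x t' a) ->
  let w := fun t => indphi phi t t' / pphi pt T phi t' in
  let s := score pi zeta j in
  let q := qmean Pr in
  n%:R * VD px pt T pi0 Pr n (opfv_grad pt T phi t' pi zeta j pi0 fhat)
  = Ex px (fun x => Et pt T (fun t => Epol pi0 x t (fun a =>
        (w t * (pi zeta x t' a / pi0 x t a) * s x t' a) ^+ 2 * sigma2 Pr x t a)))
  + Ex px (fun x => Et pt T (fun t => w t ^+ 2 *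
        Vpol pi0 x t (fun a => pi zeta x t' a / pi0 x t a
                               * (q x t' a - fhat x t' a) * s x t' a)))
  + Vt pt T w * Ex px (fun x =>
        (Epol (pi zeta) x t' (fun a => (q x t' a - fhat x t' a) * s x t' a)) ^+ 2)
  + Vx px (fun x => Epol (pi zeta) x t' (fun a => q x t' a * s x t' a)).
Proof.
move=> n0 _ reward_bounded pt_measurable pt_ge0 pt_int1 phi_measurable pi0_ge0 pi0_sum1
  pi0_measurable _ _ _ pi_measurable score_measurable _ fhat'_measurable
  summand_sq_finite pi0_gt0 pphi_gt0 shift_invariance w s q.
by rewrite (opfv_grad_variance reward_bounded pt_measurable pt_ge0 pt_int1
  phi_measurable pi0_ge0 pi0_sum1 pi0_measurable pi_measurable score_measurable
  fhat'_measurable pi0_gt0 pphi_gt0 shift_invariance summand_sq_finite n0).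
Qed.
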